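(* Fix $\rho>0$. There exists a constant $C=C(\rho)$ such that for every positive integer $K$ and every interval $I\subset\mathbb{Z}$ of $K$ consecutive sites, with $\mathcal{M}_I=\sigma\big(\sum_{x\in I}\eta(x)\big)$, $$E_{\nu_\rho}\Big[\Big(E_{\nu_\rho}\Big(\sum_{x\in I}V_g(\eta(x))\,\Big|\,\mathcal{M}_I\Big)\Big)^2\Big]\le C.$$
   Context: $g(k)=1_{\{k\ge1\}}$ for $k\in\mathbb{N}=\{0,1,2,\dots\}$. $\nu_\rho$ is the product measure on $\mathbb{N}^{\mathbb{Z}}$ with geometric marginals $\nu_\rho(\eta(x)=k)=\frac{1}{1+\rho}\big(\frac{\rho}{1+\rho}\big)^k$, $k\ge0$ (mean $\rho$). $\phi(\rho)=E_{\nu_\rho}[g(\eta(0))]=\frac{\rho}{1+\rho}$ and $V_g(\eta(x))=g(\eta(x))-\phi(\rho)-\phi'(\rho)[\eta(x)-\rho]$. *)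

From Stdlib Require Import Reals Lra Lia ZArith Arith List.
Import ListNotations.
Open Scope R_scope.

Definition g (k : nat) : R := if Nat.eqb k 0 then 0 else 1.

(* geometric marginal of nu_rho: P(eta(x) = k) = 1/(1+rho) (rho/(1+rho))^k *)
Definition geom (rho : R) (k : nat) : R := / (1 + rho) * (rho / (1 + rho)) ^ k.

(* phi(rho) = E_{nu_rho}[g(eta(0))] = rho/(1+rho) *)
Definition phi (rho : R) : R := rho / (1 + rho).

Definition phi' (rho : R) : R := / (1 + rho) ^ 2.

Lemma phi_deriv_correct (rho : R) : 0 < rho -> derivable_pt_lim phi rho (phi' rho).
Proof.
  intros Hr. unfold phi, phi'.
  assert (H1 : 1 + rho <> 0) by lra.
  assert (Hp : derivable_pt_lim (plus_fct (fun _ => 1) id) rho (0 + 1)).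
  { apply derivable_pt_lim_plus. apply derivable_pt_lim_const.
    apply derivable_pt_lim_id. }
  assert (Hd := derivable_pt_lim_div id (plus_fct (fun _ => 1) id) rho 1 (0 + 1)
                 (derivable_pt_lim_id rho) Hp H1).
  unfold div_fct, plus_fct, id in Hd.
  replace (/ (1 + rho) ^ 2) with ((1 * (1 + rho) - (0 + 1) * rho) / (1 + rho)²)
    by (unfold Rsqr; field; auto).
  exact Hd.
Qed.

Definition Vg (rho : R) (k : nat) : R :=
  g k - phi rho - phi' rho * (INR k - rho).

(* All configurations (eta(x))_{x in I} on a block of K sites with total
   particle number n, listed as lists of length K (entry i = eta(a+i)). *)
Fixpoint comps (K n : nat) : list (list nat) :=
  match K with
  | O => if Nat.eqb n 0 then [[]] else []
  | S K' => flat_map (fun j => map (cons j) (comps K' (n - j))) (seq 0 (S n))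
  end.

Definition cfg_prob (rho : R) (l : list nat) : R :=
  fold_right (fun k acc => geom rho k * acc) 1 l.

Definition eta_of (a : Z) (l : list nat) (x : Z) : nat :=
  nth (Z.to_nat (x - a)) l 0%nat.

Definition sumV (rho : R) (a : Z) (K : nat) (l : list nat) : R :=
  fold_right Rplus 0
    (map (fun i : nat => Vg rho (eta_of a l (a + Z.of_nat i)%Z)) (seq 0 K)).

Definition sumR (l : list R) : R := fold_right Rplus 0 l.

Definition probS (rho : R) (K n : nat) : R :=
  sumR (map (cfg_prob rho) (comps K n)).

Definition expS (rho : R) (a : Z) (K n : nat) : R :=
  sumR (map (fun l => cfg_prob rho l * sumV rho a K l) (comps K n)).

(* E_{nu_rho}( sum_{x in I} V_g(eta(x)) | M_I ) on the event {S_I = n}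
   (elementary conditional expectation; nu_rho(S_I = n) > 0 for rho > 0) *)
Definition condExp (rho : R) (a : Z) (K n : nat) : R :=
  expS rho a K n / probS rho K n.

(* contribution of the event {S_I = n} to E[(E(. | M_I))^2] *)
Definition sqTerm (rho : R) (a : Z) (K : nat) (n : nat) : R :=
  probS rho K n * (condExp rho a K n) ^ 2.

(* Under [nu_rho] the block sum [S_I] has the negative binomial law with parameters
   [K] and [phi rho], and given [S_I = n] the configuration is uniform over the
   [C(n+K-1, n)] compositions of [n], so each site is occupied with conditional
   probability [n / (n+K-1)].  Writing [u = n - K rho], this gives
   [E(sum V_g | S_I = n) = (K rho (1+rho) + u - u^2) / ((1+rho)^2 (n+K-1))] for [n >= 1],
   whose square is at most a constant times [(K^2 + u^4) / K^2].  The fourth central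
   moment of the negative binomial law is [O(K^2)]: Stein's identity
   [(n+1) P(S = n+1) = phi rho (n+K) P(S = n)], applied to a suitable cubic, bounds it,
   including for the partial sums of the series. *)

From Stdlib Require Import Reals ZArith.
From Stdlib Require Import Lra Lia List.
Open Scope R_scope.

Lemma sumR_app (l1 l2 : list R) : sumR (l1 ++ l2) = sumR l1 + sumR l2.
Proof. induction l1 as [|x l1 IH]; simpl; [lra | rewrite IH; lra]. Qed.

Lemma sumR_flat_map {A B : Type} (F : B -> R) (h : A -> list B) (s : list A) :
  sumR (map F (flat_map h s)) = sumR (map (fun x => sumR (map F (h x))) s).
Proof.
  induction s as [|x s IH]; simpl; [reflexivity |].
  rewrite map_app, sumR_app, IH; reflexivity.
Qed.

Lemma sumR_map_ext {A : Type} (F G : A -> R) (l : list A) :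
  (forall x, In x l -> F x = G x) -> sumR (map F l) = sumR (map G l).
Proof.
  induction l as [|x l IH]; simpl; intros H; [reflexivity |].
  rewrite H, IH; auto.
Qed.

Lemma sumR_map_plus {A : Type} (F G : A -> R) (l : list A) :
  sumR (map (fun x => F x + G x) l) = sumR (map F l) + sumR (map G l).
Proof. induction l as [|x l IH]; simpl; [lra | rewrite IH; lra]. Qed.

Lemma sumR_map_scal {A : Type} (c : R) (F : A -> R) (l : list A) :
  sumR (map (fun x => c * F x) l) = c * sumR (map F l).
Proof. induction l as [|x l IH]; simpl; [lra | rewrite IH; lra]. Qed.

Lemma sumR_seq_shift (h : nat -> R) (n : nat) :
  sumR (map h (seq 0 (S n))) = h 0%nat + sumR (map (fun j => h (S j)) (seq 0 n)).
Proof. simpl. rewrite <- seq_shift, map_map. reflexivity. Qed.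

Lemma sumR_seq_rev (h : nat -> R) (n : nat) :
  sumR (map (fun j => h (n - j)%nat) (seq 0 (S n))) = sum_f_R0 h n.
Proof.
  induction n as [|n IH]; [simpl; lra |].
  rewrite sumR_seq_shift.
  change (fun j => h (S n - S j)%nat) with (fun j => h (n - j)%nat).
  rewrite IH, Nat.sub_0_r, tech5. lra.
Qed.

Lemma comps_spec (K n : nat) (l : list nat) :
  In l (comps K n) -> length l = K /\ list_sum l = n.
Proof.
  revert n l; induction K as [|K IH]; intros n l Hl.
  - simpl in Hl. destruct (Nat.eqb_spec n 0) as [->|]; [|contradiction].
    destruct Hl as [<-|[]]; auto.
  - change (In l (flat_map (fun j => map (cons j) (comps K (n - j))) (seq 0 (S n))))
      in Hl.
    apply in_flat_map in Hl as [j [Hj Hl]].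
    apply in_map_iff in Hl as [l' [<- Hl']].
    apply in_seq in Hj. destruct (IH _ _ Hl') as [Hlen Hsum].
    simpl. split; lia.
Qed.

Lemma sumR_comps_succ (F : list nat -> R) (K n : nat) :
  sumR (map F (comps (S K) n)) =
  sumR (map (fun j => sumR (map (fun l => F (j :: l)) (comps K (n - j))))
            (seq 0 (S n))).
Proof.
  change (comps (S K) n)
    with (flat_map (fun j => map (cons j) (comps K (n - j))) (seq 0 (S n))).
  rewrite sumR_flat_map.
  apply sumR_map_ext; intros j _. rewrite map_map. reflexivity.
Qed.

(* The binomial coefficient [C(n+K-1, n)], as a real. *)
Definition ncomps (K n : nat) : R := sumR (map (fun _ => 1) (comps K n)).

Definition occupied (l : list nat) : R := sumR (map g l).

Definition occupancy (K n : nat) : R := sumR (map occupied (comps K n)).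

Lemma ncomps_succ (K n : nat) : ncomps (S K) n = sum_f_R0 (ncomps K) n.
Proof. 
  unfold ncomps at 1. rewrite sumR_comps_succ. exact (sumR_seq_rev (ncomps K) n).
Qed.

Lemma ncomps_0 (K : nat) : ncomps K 0 = 1.
Proof.
  induction K as [|K IH]; [unfold ncomps; simpl; lra |].
  rewrite ncomps_succ. exact IH.
Qed.

Lemma ncomps_nonneg (K n : nat) : 0 <= ncomps K n.
Proof.
  unfold ncomps. induction (comps K n) as [|l ls IH]; simpl; lra.
Qed.

Lemma ncomps_ratio (K n : nat) :
  INR (S n) * ncomps K (S n) = (INR n + INR K) * ncomps K n.
Proof.
  revert n; induction K as [|K IH]; intros n.
  - destruct n; unfold ncomps; simpl; lra.
  - assert (Hhockey : forall m, INR K * ncomps (S K) m = (INR m + INR K) * ncomps K m).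
    { induction m as [|m IHm].
      - rewrite ncomps_succ. simpl; lra.
      - rewrite ncomps_succ, tech5, <- ncomps_succ, Rmult_plus_distr_l, IHm, <- IH.
        rewrite !S_INR. ring. }
    rewrite ncomps_succ, tech5, <- ncomps_succ, Rmult_plus_distr_l, IH, <- Hhockey.
    rewrite !S_INR. ring.
Qed.

Lemma ncomps_pos (K n : nat) : (1 <= K)%nat -> 0 < ncomps K n.
Proof.
  intros HK. induction n as [|n IH]; [rewrite ncomps_0; lra |].
  pose proof (ncomps_ratio K n) as E.
  assert (1 <= INR K) by (apply (le_INR 1); exact HK).
  pose proof (pos_INR n).
  assert (0 < (INR n + INR K) * ncomps K n) by (apply Rmult_lt_0_compat; lra).
  rewrite S_INR in E. nra.
Qed.

Lemma occupancy_succ (K n : nat) :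
  occupancy (S K) n =
  sumR (map (fun j => g j * ncomps K (n - j) + occupancy K (n - j)) (seq 0 (S n))).
Proof.
  unfold occupancy. rewrite sumR_comps_succ.
  apply sumR_map_ext; intros j _.
  unfold occupied, ncomps. simpl.
  rewrite (sumR_map_plus (fun _ => g j)), <- sumR_map_scal.
  f_equal. apply sumR_map_ext; intros; ring.
Qed.

Lemma occupancy_0 (K : nat) : occupancy K 0 = 0.
Proof.
  induction K as [|K IH]; [unfold occupancy, occupied; simpl; lra |].
  rewrite occupancy_succ. simpl. rewrite IH. unfold g. simpl. lra.
Qed.

(* Each of the K sites is occupied in [ncomps K n] of the configurations with n+1 particles. *)
Lemma occupancy_S (K n : nat) : occupancy K (S n) = INR K * ncomps K n.
Proof.
  revert n; induction K as [|K IH]; intros n.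
  - unfold occupancy; simpl; lra.
  - rewrite occupancy_succ, sumR_map_plus, sumR_seq_rev, sumR_seq_shift.
    rewrite (sumR_map_ext _ (fun j => ncomps K (n - j))) by (intros; unfold g; simpl; ring).
    rewrite sumR_seq_rev, <- ncomps_succ.
    rewrite decomp_sum by lia. simpl pred. rewrite occupancy_0.
    rewrite (sum_eq _ (fun i => ncomps K i * INR K)) by (intros; rewrite IH; ring).
    rewrite <- scal_sum, <- ncomps_succ, S_INR. unfold g; simpl. ring.
Qed.

Lemma cfg_prob_eq (rho : R) (l : list nat) :
  cfg_prob rho l = (/ (1 + rho)) ^ length l * phi rho ^ list_sum l.
Proof.
  induction l as [|k l IH]; simpl; [lra |].
  rewrite IH, pow_add. unfold geom, phi. ring.
Qed.

Lemma probS_eq (rho : R) (K n : nat) :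
  probS rho K n = (/ (1 + rho)) ^ K * phi rho ^ n * ncomps K n.
Proof.
  unfold probS, ncomps. rewrite <- sumR_map_scal.
  apply sumR_map_ext; intros l Hl.
  destruct (comps_spec _ _ _ Hl) as [Hlen Hsum].
  rewrite cfg_prob_eq, Hlen, Hsum. ring.
Qed.

Lemma probS_nonneg (rho : R) (K n : nat) : 0 < rho -> 0 <= probS rho K n.
Proof.
  intros Hr. rewrite probS_eq.
  apply Rmult_le_pos; [apply Rmult_le_pos | apply ncomps_nonneg]; apply pow_le.
  - apply Rlt_le, Rinv_0_lt_compat; lra.
  - unfold phi. apply Rle_mult_inv_pos; lra.
Qed.

Lemma probS_ratio (rho : R) (K n : nat) :
  INR (S n) * probS rho K (S n) = phi rho * (INR n + INR K) * probS rho K n.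
Proof.
  rewrite !probS_eq. simpl pow at 2.
  transitivity ((/ (1 + rho)) ^ K * phi rho * phi rho ^ n * (INR (S n) * ncomps K (S n)));
    [ring |].
  rewrite ncomps_ratio. ring.
Qed.

Lemma map_nth_seq {A : Type} (d : A) (l : list A) :
  map (fun i => nth i l d) (seq 0 (length l)) = l.
Proof.
  induction l as [|x l IH]; simpl; [reflexivity |].
  rewrite <- seq_shift, map_map. f_equal. exact IH.
Qed.

(* The part of [sum_{x in I} V_g(eta(x))] that depends only on K and S_I = n. *)
Definition centering (rho : R) (K : nat) (n : R) : R :=
  INR K * phi rho + phi' rho * (n - INR K * rho).

Lemma sumV_eq (rho : R) (a : Z) (K : nat) (l : list nat) :
  length l = K ->
  sumV rho a K l = occupied l - centering rho K (INR (list_sum l)).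
Proof.
  intros <-. unfold sumV.
  transitivity (sumR (map (Vg rho) l)).
  { rewrite <- (map_nth_seq 0%nat l) at 2. rewrite map_map.
    unfold sumR. f_equal. apply map_ext; intros i.
    unfold eta_of. do 2 f_equal. lia. }
  unfold occupied, centering, sumR, list_sum.
  induction l as [|k l IH]; [simpl; lra |].
  cbn -[INR]. rewrite IH, plus_INR, S_INR. unfold Vg. ring.
Qed.

Lemma expS_eq (rho : R) (a : Z) (K n : nat) :
  expS rho a K n =
  (/ (1 + rho)) ^ K * phi rho ^ n *
  (occupancy K n - ncomps K n * centering rho K (INR n)).
Proof.
  unfold expS, occupancy, ncomps.
  transitivity (sumR (map (fun l => (/ (1 + rho)) ^ K * phi rho ^ n *
    (occupied l + - centering rho K (INR n) * 1)) (comps K n))).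
  - apply sumR_map_ext; intros l Hl.
    destruct (comps_spec _ _ _ Hl) as [Hlen Hsum].
    rewrite cfg_prob_eq, sumV_eq, Hlen, Hsum by exact Hlen. ring.
  - rewrite sumR_map_scal, sumR_map_plus, sumR_map_scal. ring.
Qed.

Lemma condExp_eq (rho : R) (a : Z) (K n : nat) :
  0 < rho -> (1 <= K)%nat ->
  condExp rho a K n = occupancy K n / ncomps K n - centering rho K (INR n).
Proof.
  intros Hr HK. unfold condExp. rewrite expS_eq, probS_eq.
  pose proof (ncomps_pos K n HK).
  assert (0 < (/ (1 + rho)) ^ K) by (apply pow_lt, Rinv_0_lt_compat; lra).
  assert (0 < phi rho ^ n) by (apply pow_lt; unfold phi; apply Rdiv_lt_0_compat; lra).
  field. repeat split; lra.
Qed.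

Lemma condExp_S (rho : R) (a : Z) (K m : nat) :
  0 < rho -> (1 <= K)%nat ->
  let u := INR (S m) - INR K * rho in
  (1 + rho) ^ 2 * (INR m + INR K) * condExp rho a K (S m) =
  INR K * rho * (1 + rho) + u - u ^ 2.
Proof.
  intros Hr HK u. rewrite condExp_eq, occupancy_S by assumption.
  pose proof (ncomps_pos K m HK).
  pose proof (ncomps_ratio K m) as Hratio.
  assert (1 <= INR K) by (apply (le_INR 1); exact HK).
  pose proof (pos_INR m).
  replace (ncomps K (S m)) with ((INR m + INR K) * ncomps K m / INR (S m))
    by (rewrite <- Hratio; field; rewrite S_INR; lra).
  unfold u, centering, phi, phi'. rewrite S_INR. field. repeat split; lra.
Qed.

Lemma condExp_0 (rho : R) (a : Z) (K : nat) :
  0 < rho -> (1 <= K)%nat ->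
  (1 + rho) ^ 2 * condExp rho a K 0 = - (INR K * rho ^ 2).
Proof.
  intros Hr HK. rewrite condExp_eq, occupancy_0, ncomps_0 by assumption.
  unfold centering, phi, phi'. simpl INR. field. lra.
Qed.

Lemma condExp_sq_le (rho : R) (a : Z) (K n : nat) :
  0 < rho -> (1 <= K)%nat ->
  let u := INR n - INR K * rho in
  ((1 + rho) ^ 2 * INR K * condExp rho a K n) ^ 2 <=
  3 * ((INR K * rho * (1 + rho)) ^ 2 + 1 + 2 * u ^ 4).
Proof.
  intros Hr HK u.
  assert (HK1 : 1 <= INR K) by (apply (le_INR 1); exact HK).
  assert (Hu2 : u ^ 2 <= 1 + u ^ 4)
    by (pose proof (pow2_ge_0 (u ^ 2 - 1)); replace (u ^ 4) with ((u ^ 2) ^ 2) by ring; nra).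
  assert (0 <= (INR K * rho * (1 + rho)) ^ 2) by apply pow2_ge_0.
  destruct n as [|m].
  - assert (Hu : (1 + rho) ^ 2 * INR K * condExp rho a K 0 = - u ^ 2).
    { rewrite Rmult_assoc, (Rmult_comm (INR K)), <- Rmult_assoc, condExp_0 by assumption.
      unfold u. simpl INR. ring. }
    rewrite Hu. assert (0 <= u ^ 4) by (replace (u ^ 4) with ((u ^ 2) ^ 2) by ring; apply pow2_ge_0).
    replace ((- u ^ 2) ^ 2) with (u ^ 4) by ring. lra.
  - set (A := INR K * rho * (1 + rho)).
    set (X := condExp rho a K (S m)).
    pose proof (condExp_S rho a K m Hr HK) as HX. fold u A X in HX.
    pose proof (pos_INR m).
    assert (Hle : ((1 + rho) ^ 2 * INR K * X) ^ 2 <= ((1 + rho) ^ 2 * (INR m + INR K) * X) ^ 2).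
    { replace (((1 + rho) ^ 2 * INR K * X) ^ 2) with (((1 + rho) ^ 2 * X) ^ 2 * INR K ^ 2) by ring.
      replace (((1 + rho) ^ 2 * (INR m + INR K) * X) ^ 2)
        with (((1 + rho) ^ 2 * X) ^ 2 * (INR m + INR K) ^ 2) by ring.
      apply Rmult_le_compat_l; [apply pow2_ge_0 | nra]. }
    rewrite HX in Hle.
    (* [(A + u - u^2)^2 <= 3 (A^2 + u^2 + u^4)] by Cauchy-Schwarz. *)
    pose proof (pow2_ge_0 (A - u)). pose proof (pow2_ge_0 (u + u ^ 2)).
    pose proof (pow2_ge_0 (A + u ^ 2)).
    replace (u ^ 4) with ((u ^ 2) ^ 2) in * by ring. nra.
Qed.

Lemma sum_f_R0_le_add (f : nat -> R) (N k : nat) :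
  (forall n, 0 <= f n) -> sum_f_R0 f N <= sum_f_R0 f (N + k).
Proof.
  intros Hf. induction k as [|k IH]; [rewrite Nat.add_0_r; lra |].
  rewrite Nat.add_succ_r, tech5. specialize (Hf (S (N + k))). lra.
Qed.

Lemma ncomps_gf_partial_succ (x : R) (K M : nat) :
  (1 - x) * sum_f_R0 (fun n => x ^ n * ncomps (S K) n) M + x ^ S M * ncomps (S K) M =
  sum_f_R0 (fun n => x ^ n * ncomps K n) M.
Proof.
  induction M as [|M IH]; [simpl; rewrite ncomps_succ; simpl; ring |].
  rewrite !tech5, <- IH, (ncomps_succ K (S M)), tech5, <- ncomps_succ. simpl. ring.
Qed.

Lemma ncomps_gf_partial_le (x : R) (K M : nat) :
  0 <= x < 1 -> sum_f_R0 (fun n => x ^ n * ncomps K n) M <= / (1 - x) ^ K.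
Proof.
  intros Hx. revert M; induction K as [|K IH]; intros M.
  - induction M as [|M IHM]; [unfold ncomps; simpl; lra |].
    rewrite tech5. unfold ncomps at 2. simpl in *. lra.
  - pose proof (ncomps_gf_partial_succ x K M) as E.
    assert (0 <= x ^ S M * ncomps (S K) M)
      by (apply Rmult_le_pos; [apply pow_le; lra | apply ncomps_nonneg]).
    specialize (IH M).
    assert (H1 : (1 - x) * sum_f_R0 (fun n => x ^ n * ncomps (S K) n) M <= / (1 - x) ^ K)
      by lra.
    replace (/ (1 - x) ^ S K) with (/ (1 - x) * / (1 - x) ^ K)
      by (simpl; field; split; [apply pow_nonzero |]; lra).
    apply (Rmult_le_compat_l (/ (1 - x))) in H1; [| apply Rlt_le, Rinv_0_lt_compat; lra].
    rewrite <- Rmult_assoc, Rinv_l, Rmult_1_l in H1 by lra. exact H1.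
Qed.

Lemma probS_partial_mass_le (rho : R) (K M : nat) :
  0 < rho -> sum_f_R0 (probS rho K) M <= 1.
Proof.
  intros Hr.
  assert (Hphi : 0 <= phi rho < 1) by (unfold phi; split;
    [apply Rle_mult_inv_pos | apply Rmult_lt_reg_r with (1 + rho); field_simplify]; lra).
  rewrite (sum_eq _ (fun n => phi rho ^ n * ncomps K n * (/ (1 + rho)) ^ K))
    by (intros; rewrite probS_eq; ring).
  rewrite <- scal_sum.
  apply Rle_trans with ((/ (1 + rho)) ^ K * / (1 - phi rho) ^ K).
  - apply Rmult_le_compat_l; [apply pow_le, Rlt_le, Rinv_0_lt_compat; lra |].
    exact (ncomps_gf_partial_le _ K M Hphi).
  - right. replace (1 - phi rho) with (/ (1 + rho)) by (unfold phi; field; lra).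
    field. apply pow_nonzero, Rinv_neq_0_compat. lra.
Qed.

Lemma sum_stein_telescope (pi b f : nat -> R) (N : nat) :
  (forall n, INR (S n) * pi (S n) = b n * pi n) ->
  sum_f_R0 (fun n => pi n * (INR n * f n - b n * f (S n))) N =
  - (INR (S N) * pi (S N) * f (S N)).
Proof.
  intros Hpi. induction N as [|N IH].
  - specialize (Hpi 0%nat). simpl in *. nra.
  - rewrite tech5, IH. specialize (Hpi (S N)).
    transitivity (- (INR (S (S N)) * pi (S (S N))) * f (S (S N))); [| ring].
    rewrite Hpi. ring.
Qed.

(* The fourth central moment of the negative binomial law of [S_I]
   (mean [K rho], variance [K rho (1 + rho)]). *)
Definition fourth_moment_const (rho : R) (K : nat) : R :=
  rho * INR K * (1 + rho) * (1 + 6 * rho + 6 * rho ^ 2)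
  + 3 * rho ^ 2 * (1 + rho) ^ 2 * INR K ^ 2.

(* Obtained from a cubic ansatz for the Stein equation of [stein_cubic_spec];
   all its coefficients are nonnegative. *)
Definition stein_cubic (rho : R) (K : nat) (u : R) : R :=
  let b := rho * (3 + 6 * rho) + 3 * rho * INR K * (1 + rho) in
  u ^ 3 + 3 * rho * u ^ 2 + b * u
  + rho * (1 + 3 * rho + b) + rho * INR K * (1 + rho) * (3 + 6 * rho).

Lemma stein_cubic_spec (rho : R) (K n : nat) :
  0 < rho ->
  let u m := INR m - INR K * rho in
  (1 + rho) * (INR n * stein_cubic rho K (u n)
               - phi rho * (INR n + INR K) * stein_cubic rho K (u (S n)))
  = u n ^ 4 - fourth_moment_const rho K.
Proof.
  intros Hr u. unfold u, stein_cubic, fourth_moment_const, phi.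
  rewrite S_INR. field. lra.
Qed.

Lemma stein_cubic_nonneg (rho : R) (K : nat) (u : R) :
  0 < rho -> 0 <= u -> 0 <= stein_cubic rho K u.
Proof.
  intros Hr Hu. pose proof (pos_INR K).
  assert (0 <= rho * INR K * (1 + rho)) by (apply Rmult_le_pos; nra).
  unfold stein_cubic.
  assert (0 <= u ^ 2) by nra. assert (0 <= u ^ 3) by (apply pow_le; lra).
  nra.
Qed.

Lemma probS_fourth_moment_le (rho : R) (K M : nat) :
  0 < rho -> INR K * rho <= INR (S M) ->
  sum_f_R0 (fun n => probS rho K n * (INR n - INR K * rho) ^ 4) M
  <= fourth_moment_const rho K.
Proof.
  intros Hr HM.
  set (F n := stein_cubic rho K (INR n - INR K * rho)).
  assert (Hstein := sum_stein_telescope (probS rho K) (fun n => phi rho * (INR n + INR K)) F M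
                      (probS_ratio rho K)).
  assert (E : sum_f_R0 (fun n => probS rho K n * (INR n - INR K * rho) ^ 4) M =
    (1 + rho) * sum_f_R0 (fun n => probS rho K n *
       (INR n * F n - phi rho * (INR n + INR K) * F (S n))) M
    + fourth_moment_const rho K * sum_f_R0 (probS rho K) M).
  { rewrite !scal_sum, <- plus_sum. apply sum_eq; intros n _.
    pose proof (stein_cubic_spec rho K n Hr) as Hs. cbv beta zeta in Hs.
    change (stein_cubic rho K (INR n - INR K * rho)) with (F n) in Hs.
    change (stein_cubic rho K (INR (S n) - INR K * rho)) with (F (S n)) in Hs.
    transitivity (probS rho K n * ((1 + rho) *
      (INR n * F n - phi rho * (INR n + INR K) * F (S n)) + fourth_moment_const rho K));
      [rewrite Hs |]; ring. }
  rewrite E, Hstein.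
  assert (0 <= INR (S M) * probS rho K (S M) * F (S M)).
  { apply Rmult_le_pos; [apply Rmult_le_pos; [apply pos_INR | apply probS_nonneg; exact Hr] |].
    apply stein_cubic_nonneg; lra. }
  assert (0 <= fourth_moment_const rho K).
  { unfold fourth_moment_const. pose proof (pos_INR K).
    assert (0 <= rho * INR K * (1 + rho)) by (apply Rmult_le_pos; nra).
    assert (0 <= rho ^ 2 * (1 + rho) ^ 2 * INR K ^ 2) by
      (rewrite <- !Rpow_mult_distr; apply pow2_ge_0).
    nra. }
  pose proof (probS_partial_mass_le rho K M Hr).
  nra.
Qed.

Lemma sqTerm_nonneg (rho : R) (a : Z) (K n : nat) : 0 < rho -> 0 <= sqTerm rho a K n.
Proof.
  intros Hr. unfold sqTerm.
  apply Rmult_le_pos; [apply probS_nonneg; exact Hr | apply pow2_ge_0].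
Qed.

Lemma sqTerm_le (rho : R) (a : Z) (K n : nat) :
  0 < rho -> (1 <= K)%nat ->
  (1 + rho) ^ 4 * INR K ^ 2 * sqTerm rho a K n <=
  3 * probS rho K n * ((INR K * rho * (1 + rho)) ^ 2 + 1 + 2 * (INR n - INR K * rho) ^ 4).
Proof.
  intros Hr HK. unfold sqTerm.
  pose proof (condExp_sq_le rho a K n Hr HK) as Hsq. cbv zeta in Hsq.
  pose proof (probS_nonneg rho K n Hr).
  replace ((1 + rho) ^ 4 * INR K ^ 2 * (probS rho K n * condExp rho a K n ^ 2))
    with (probS rho K n * ((1 + rho) ^ 2 * INR K * condExp rho a K n) ^ 2) by ring.
  nra.
Qed.

Lemma sum_sqTerm_le (rho : R) (a : Z) (K M : nat) :
  0 < rho -> (1 <= K)%nat -> INR K * rho <= INR (S M) ->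
  (1 + rho) ^ 4 * INR K ^ 2 * sum_f_R0 (sqTerm rho a K) M <=
  3 * ((INR K * rho * (1 + rho)) ^ 2 + 1 + 2 * fourth_moment_const rho K).
Proof.
  intros Hr HK HM.
  set (A := (INR K * rho * (1 + rho)) ^ 2 + 1).
  rewrite scal_sum.
  apply Rle_trans with
    (sum_f_R0 (fun n => 3 * probS rho K n * (A + 2 * (INR n - INR K * rho) ^ 4)) M).
  { apply sum_Rle; intros n _. rewrite Rmult_comm. exact (sqTerm_le rho a K n Hr HK). }
  rewrite (sum_eq _ (fun n => probS rho K n * (3 * A)
                             + probS rho K n * (INR n - INR K * rho) ^ 4 * 6))
    by (intros; ring).
  rewrite plus_sum, <- !scal_sum.
  pose proof (probS_partial_mass_le rho K M Hr).
  pose proof (probS_fourth_moment_le rho K M Hr HM).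
  assert (0 <= A) by (unfold A; pose proof (pow2_ge_0 (INR K * rho * (1 + rho))); lra).
  nra.
Qed.

Lemma fourth_moment_const_le (rho : R) (K : nat) :
  0 < rho -> (1 <= K)%nat ->
  fourth_moment_const rho K <= INR K ^ 2 * fourth_moment_const rho 1.
Proof.
  intros Hr HK. unfold fourth_moment_const.
  assert (HK1 : 1 <= INR K) by (apply (le_INR 1); exact HK).
  set (s := rho * (1 + rho) * (1 + 6 * rho + 6 * rho ^ 2)).
  assert (0 <= s) by (unfold s; apply Rmult_le_pos; nra).
  assert (s * INR K <= s * INR K ^ 2) by (apply Rmult_le_compat_l; nra).
  simpl INR. unfold s in *. nra.
Qed.

Theorem mainTheorem12 (rho : R) (Hrho : 0 < rho) :
  exists C : R,
    forall (K : nat) (a : Z), (1 <= K)%nat ->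
      forall N : nat, sum_f_R0 (sqTerm rho a K) N <= C.
Proof.
  set (c := 3 * ((rho * (1 + rho)) ^ 2 + 1 + 2 * fourth_moment_const rho 1)).
  exists (c / (1 + rho) ^ 4).
  intros K a HK N.
  assert (HK1 : 1 <= INR K) by (apply (le_INR 1); exact HK).
  assert (Ht : 0 < (1 + rho) ^ 4) by (apply pow_lt; lra).
  destruct (INR_archimed 1 (INR K * rho) Rlt_0_1) as [k Hk].
  assert (HM : INR K * rho <= INR (S (N + k))).
  { assert (INR k <= INR (S (N + k))) by (apply le_INR; lia). lra. }
  apply Rle_trans with (sum_f_R0 (sqTerm rho a K) (N + k)).
  { apply sum_f_R0_le_add. intros n. apply sqTerm_nonneg. exact Hrho. }
  pose proof (sum_sqTerm_le rho a K (N + k) Hrho HK HM) as Hsum.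
  pose proof (fourth_moment_const_le rho K Hrho HK).
  assert (Hc : 3 * ((INR K * rho * (1 + rho)) ^ 2 + 1 + 2 * fourth_moment_const rho K)
               <= INR K ^ 2 * c).
  { unfold c. assert (1 <= INR K ^ 2) by nra. nra. }
  apply Rmult_le_reg_l with ((1 + rho) ^ 4 * INR K ^ 2); [nra |].
  replace ((1 + rho) ^ 4 * INR K ^ 2 * (c / (1 + rho) ^ 4)) with (INR K ^ 2 * c)
    by (field; lra).
  lra.
Qed.
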